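(* Let $n$ be a positive integer. If $n \equiv 1 \pmod 3$, then $n \leq \operatorname{adim}(P_3 \square P_n) \leq n+1$. Otherwise, $n-1 \leq \operatorname{adim}(P_3 \square P_n) \leq n$.
   Context: All graphs are finite, simple and undirected. $P_n$ is the path on $n$ vertices and $\square$ is the Cartesian product of graphs: $V(G_1\square G_2)=V(G_1)\times V(G_2)$, and $(u,u')$ is adjacent to $(v,v')$ iff either $u=v$ and $u'v'\in E(G_2)$, or $u'=v'$ and $uv\in E(G_1)$. For a graph $G$, $d(u,v)$ is the shortest-path distance ($\infty$ if $u,v$ lie in different components), and $d_1(u,v)=\min(d(u,v),2)$. A set $A\subseteq V(G)$ is an adjacency resolving set if for all distinct $x,y\in V(G)$ there is $z\in A$ with $d_1(z,x)\neq d_1(z,y)$. The adjacency dimension $\operatorname{adim}(G)$ is the minimum cardinality of an adjacency resolving set. *)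

From mathcomp Require Import all_boot.
Set Implicit Arguments. Unset Strict Implicit. Unset Printing Implicit Defensive.

(* A finite simple graph on vertex type T is given by a symmetric irreflexive
   adjacency relation e : rel T (hypotheses stated where needed). *)

(* d_1(u,v) = min(d(u,v), 2): 0 if u = v, 1 if adjacent, 2 otherwise. *)
Definition d1 (T : finType) (e : rel T) (u v : T) : nat :=
  if u == v then 0 else if e u v then 1 else 2.

Definition adj_resolving (T : finType) (e : rel T) (A : {set T}) : bool :=
  [forall x : T, forall y : T, (x != y) ==> [exists z in A, d1 e z x != d1 e z y]].

(* Minimum cardinality of an adjacency resolving set (setT always resolves,
   so the default #|T| is never smaller than the true minimum). *)
Definition adim (T : finType) (e : rel T) : nat :=
  \big[minn/#|T|]_(A : {set T} | adj_resolving e A) #|A|.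

Definition path_rel (n : nat) : rel 'I_n :=
  fun i j => (i.+1 == j :> nat) || (j.+1 == i :> nat).

Definition cart_rel (T1 T2 : finType) (e1 : rel T1) (e2 : rel T2) : rel (prod T1 T2) :=
  fun u v => ((u.1 == v.1) && e2 u.2 v.2) || ((u.2 == v.2) && e1 u.1 v.1).

Definition grid3 (n : nat) : rel (prod 'I_3 'I_n) := cart_rel (@path_rel 3) (@path_rel n).

From mathcomp Require Import all_boot zify.
Set Implicit Arguments. Unset Strict Implicit. Unset Printing Implicit Defensive.

(* An adjacency resolving set A must separate any two vertices outside A by a
   neighbour in A, and can leave at most one vertex without a neighbour in A;
   adding that vertex gives a locating-dominating set.  In P_3 x P_n, whether a
   set is locating-dominating is decided by windows of five consecutive columns,
   so a transfer-matrix argument applies: a potential on quadruples of column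
   patterns, computed as shortest-path distances and checked by evaluation,
   shows that every column costs one vertex on average and the whole grid one
   more, so adim >= n.  For the upper bound, columns cycling through the row
   sets {0,2}, {}, {1} resolve the grid; the set is periodic, so checking its
   windows on grids with fewer than ten columns suffices. *)

(** * Adjacency resolving and locating-dominating sets *)

Lemma bigmin_le (I : eqType) (r : seq I) (P : pred I) (F : I -> nat) x0 i :
  i \in r -> P i -> \big[minn/x0]_(j <- r | P j) F j <= F i.
Proof.
elim: r => // j r IH; rewrite inE big_cons => /predU1P[-> -> | ir Pi].
  exact: geq_minl.
by case: ifP => _; [apply: leq_trans (geq_minr _ _) _ |]; apply: IH.
Qed.

Section AdjacencyResolving.
Variables (T : finType) (e : rel T).
Implicit Types (A B : {set T}) (x y z : T).

Definition dominated A x := [exists z in A, e z x].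
Definition separated A x y := [exists z in A, e z x != e z y].
Definition separating A :=
  forall x y, x \notin A -> y \notin A -> x != y -> separated A x y.
Definition locating_dominating A :=
  (forall x, x \notin A -> dominated A x) /\ separating A.

Lemma separatedC A x y : separated A x y = separated A y x.
Proof. by apply/exists_inP/exists_inP => -[z zA xy]; exists z; rewrite // eq_sym. Qed.

Lemma separated_by_dominator A x y z :
  z \in A -> e z x -> ~~ e z y -> separated A x y.
Proof. by move=> zA zx zy; apply/exists_inP; exists z; rewrite // zx (negbTE zy). Qed.

Lemma separatedS A B x y : A \subset B -> separated A x y -> separated B x y.
Proof.
by rewrite /separated => /subsetP AB /exists_inP[z /AB zB zxy]; apply/exists_inP; exists z.
Qed.

Lemma adj_resolvingP A : reflect (separating A) (adj_resolving e A).
Proof.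
apply: (iffP forallP) => [res x y xA yA xy | sep x].
  have /forallP/(_ y)/implyP/(_ xy)/exists_inP[z zA] := res x.
  have zx : z != x by apply: contraNneq xA => <-.
  have zy : z != y by apply: contraNneq yA => <-.
  rewrite /d1 (negbTE zx) (negbTE zy) => d1xy.
  by apply/exists_inP; exists z; case: (e z x) (e z y) d1xy => -[].
apply/forallP => y; apply/implyP => xy; apply/exists_inP.
have [xA | xA] := boolP (x \in A).
  by exists x; rewrite // /d1 eqxx (negbTE xy); case: (e x y).
have [yA | yA] := boolP (y \in A).
  by exists y; rewrite // /d1 (eq_sym y x) (negbTE xy) eqxx; case: (e y x).
have /exists_inP[z zA zxy] := sep x y xA yA xy.
have zx : z != x by apply: contraNneq xA => <-.
have zy : z != y by apply: contraNneq yA => <-.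
by exists z; rewrite // /d1 (negbTE zx) (negbTE zy); case: (e z x) (e z y) zxy => -[].
Qed.

Lemma adim_leq_card A : adj_resolving e A -> adim e <= #|A|.
Proof. by move=> resA; apply: bigmin_le; rewrite ?mem_index_enum. Qed.

Lemma adim_geq m : (forall A, adj_resolving e A -> m <= #|A|) -> m <= adim e.
Proof.
move=> le_m; apply: (big_ind (leq m)) => [||A]; last exact: le_m.
  by rewrite -cardsT le_m //; apply/adj_resolvingP => x y; rewrite in_setT.
by move=> p q mp mq; rewrite leq_min mp.
Qed.

(* Add the undominated vertex outside A, if there is one. *)
Lemma locating_dominating_of_resolving A :
  adj_resolving e A -> exists2 B, locating_dominating B & #|B| <= #|A|.+1.
Proof.
move=> /adj_resolvingP sepA.
case: (pickP [pred v | (v \notin A) && ~~ dominated A v]) => [v /andP[vA vA'] | domA].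
  exists (v |: A); last by rewrite cardsU1 vA.
  split=> [x | x y]; rewrite !in_setU1 !negb_or => /andP[xv xA].
    have /exists_inP[z zA] := sepA x v xA vA xv.
    have /negbTE -> : ~~ e z v by apply: contra vA' => zv; apply/exists_inP; exists z.
    by rewrite eqbF_neg negbK => zx; apply/exists_inP; exists z => //; apply: setU1r.
  move=> /andP[_ yA] /(sepA x y xA yA); apply: separatedS; exact: subsetUr.
exists A; last exact: leqnSn.
by split=> // x xA; move: (domA x); rewrite /= xA /= => /negbFE.
Qed.

End AdjacencyResolving.

Definition strip_adj (u v : nat * nat) : bool :=
  ((u.2 == v.2) && ((u.1.+1 == v.1) || (v.1.+1 == u.1))) ||
  ((u.1 == v.1) && ((u.2.+1 == v.2) || (v.2.+1 == u.2))).

(* A column of a vertex set of the 3 x n grid is encoded by the bitmask of its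
   rows, and [absent] encodes a column outside the grid. *)
Definition absent : nat := 8.
Definition codes : seq nat := iota 0 absent.+1.
Definition bit (x r : nat) : bool := odd (x %/ 2 ^ r).
Definition weight (x : nat) : nat := bit x 0 + bit x 1 + bit x 2.

Definition window (f : nat -> nat) (o : nat) : seq nat :=
  [:: f o; f o.+1; f o.+2; f o.+3; f o.+4].
Definition present (w : seq nat) (c : nat) : bool := nth absent w c != absent.
Definition occupied (w : seq nat) (z : nat * nat) : bool := bit (nth absent w z.1) z.2.
Definition cells (cs : seq nat) : seq (nat * nat) :=
  [seq (c, r) | c <- cs, r <- iota 0 3].
Definition members (w : seq nat) : seq (nat * nat) :=
  [seq z <- cells (iota 0 5) | occupied w z].
Definition vacant (w : seq nat) (cs : seq nat) : seq (nat * nat) :=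
  [seq z <- cells cs | present w z.1 && ~~ occupied w z].

Lemma bit_absent r : r < 3 -> bit absent r = false.
Proof. by case: r => [|[|[|]]]. Qed.

Lemma mem_cells cs z : (z \in cells cs) = (z.1 \in cs) && (z.2 < 3).
Proof.
case: z => c r; apply/allpairsP/andP => [[[c1 r1] [hc hr [-> ->]]] | [hc hr]].
  by change (is_true (r1 \in iota 0 3)) in hr; rewrite mem_iota in hr.
by exists (c, r); rewrite mem_iota.
Qed.

Lemma mem_members w z : (z \in members w) = [&& z.1 < 5, z.2 < 3 & occupied w z].
Proof. by rewrite mem_filter mem_cells mem_iota andbC -andbA. Qed.

Lemma mem_vacant w cs z :
  (z \in vacant w cs) = [&& z.1 \in cs, z.2 < 3, present w z.1 & ~~ occupied w z].
Proof. by rewrite mem_filter mem_cells andbC -andbA. Qed.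

Lemma nth_window f o c : c < 5 -> nth absent (window f o) c = f (o + c).
Proof. by case: c => [|[|[|[|[|]]]]] //= _; rewrite ?addn0 ?addn1 ?addn2 ?addn3 ?addn4. Qed.

(* Every neighbour of a cell in columns 1 to 3 of a window of five columns lies
   in the window, so this is locating domination checked at the centre column 3.
   With [exempt], the middle cell of a last column may be undominated. *)
Definition window_ok (exempt : bool) (w : seq nat) : bool :=
  let zs := members w in
  all (fun x => (has (strip_adj^~ x) zs || [&& exempt, x == (3, 1) & ~~ present w 4]) &&
        all (fun y => (y == x) || has (fun z => strip_adj z x != strip_adj z y) zs)
            (vacant w (iota 1 3)))
      (vacant w [:: 3]).

(** * A potential for the transfer graph *)

Definition table := seq (seq (seq (seq (option nat)))).
Definition tabulate (f : nat -> nat -> nat -> nat -> option nat) : table :=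
  [seq [seq [seq [seq f a b c d | d <- codes] | c <- codes] | b <- codes] | a <- codes].
Definition lookup (t : table) (a b c d : nat) : option nat :=
  nth None (nth [::] (nth [::] (nth [::] t a) b) c) d.
Definition omin (u v : option nat) : option nat :=
  match u, v with Some p, Some q => Some (minn p q) | None, _ => v | _, None => u end.

(* One Bellman-Ford round for the shortest paths from four absent columns in
   the graph whose states are four consecutive columns and where appending a
   column x costs [weight x - 1]; distances are shifted by 2 to stay in nat.
   Eight rounds reach the fixed point, but only [certificate] is relied on. *)
Definition relax (t : table) : table :=
  tabulate (fun b c d x =>
    let start := if [&& b == absent, c == absent, d == absent & x == absent]
                 then Some 2 else None in
    if x == absent then start else
    foldr omin start
      [seq if lookup t a b c d is Some v then
             if window_ok false [:: a; b; c; d; x] then Some (v + weight x - 1) else None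
           else None | a <- codes]).

Definition potential : table := iter 8 relax (tabulate (fun _ _ _ _ => None)).

Definition certificate (t : table) : bool :=
  (lookup t absent absent absent absent == Some 2) &&
  all (fun a => all (fun b => all (fun c => all (fun d =>
    if lookup t a b c d is Some v then
      all (fun x => window_ok false [:: a; b; c; d; x] ==>
             if lookup t b c d x is Some v' then v' < v + weight x else false) (iota 0 absent)
      && ((d != absent) && window_ok false [:: a; b; c; d; absent] ==> (2 < v))
    else true) codes) codes) codes) codes.

Lemma potential_certified : certificate potential.
Proof. by vm_compute. Qed.

Lemma potential_start : lookup potential absent absent absent absent = Some 2.
Proof. by have /andP[/eqP] := potential_certified. Qed.

Lemma potential_step a b c d x v :
  [/\ a \in codes, b \in codes, c \in codes & d \in codes] -> x < absent ->
  lookup potential a b c d = Some v -> window_ok false [:: a; b; c; d; x] ->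
  exists2 v', lookup potential b c d x = Some v' & v' < v + weight x.
Proof.
case=> ha hb hc hd hx hv ok.
have /andP[_ /allP/(_ a ha)/allP/(_ b hb)/allP/(_ c hc)/allP/(_ d hd)] := potential_certified.
rewrite hv => /andP[/allP/(_ x) + _].
by rewrite mem_iota ok => /(_ hx); case: lookup => // v'; exists v'.
Qed.

Lemma potential_final a b c d v :
  [/\ a \in codes, b \in codes, c \in codes & d \in codes] -> d != absent ->
  lookup potential a b c d = Some v -> window_ok false [:: a; b; c; d; absent] -> 2 < v.
Proof.
case=> ha hb hc hd d_pres hv ok.
have /andP[_ /allP/(_ a ha)/allP/(_ b hb)/allP/(_ c hc)/allP/(_ d hd)] := potential_certified.
by rewrite hv d_pres ok => /andP[_].
Qed.

Notation vertex n := ('I_3 * 'I_n)%type.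

(* Grid column j is strip column j + 4, so that the strip starts with the four
   absent columns of the initial state of the transfer graph. *)
Definition pos n (v : vertex n) : nat * nat := (v.2 + 4, val v.1).
Definition local (o : nat) (z : nat * nat) : nat * nat := (o + z.1, z.2).

Definition colcode n (A : {set vertex n}) (j : 'I_n) : nat :=
  \sum_(r < 3) ((r, j) \in A) * 2 ^ r.
Definition code n (A : {set vertex n}) (g : nat) : nat :=
  if insub (g - 4) is Some j then if 4 <= g then colcode A j else absent else absent.

Section GridEncoding.
Variables (n : nat) (A : {set vertex n}).
Implicit Types (u v x y : vertex n) (z : nat * nat).

Lemma grid3E u v : grid3 u v = strip_adj (pos u) (pos v).
Proof. by rewrite /grid3 /cart_rel /path_rel /strip_adj /= -!addSn !eqn_add2r. Qed.

Lemma strip_adj_local o z1 z2 : strip_adj (local o z1) (local o z2) = strip_adj z1 z2.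
Proof. by rewrite /strip_adj /= -!addnS !eqn_add2l. Qed.

Lemma grid3_local o u v zu zv :
  pos u = local o zu -> pos v = local o zv -> grid3 u v = strip_adj zu zv.
Proof. by move=> uz vz; rewrite grid3E uz vz strip_adj_local. Qed.

Lemma pos_inj : injective (@pos n).
Proof.
move=> [u1 u2] [v1 v2] [/eqP]; rewrite eqn_add2r => /eqP e2 e1.
by congr pair; apply: val_inj.
Qed.

Lemma grid3_near u v : grid3 u v -> u.2 <= v.2.+1 /\ v.2 <= u.2.+1.
Proof.
case: u v => [u1 u2] [v1 v2].
rewrite /grid3 /cart_rel /path_rel /=.
by case/orP=> [/andP[_ /orP[] /eqP <-] | /andP[/eqP -> _]]; lia.
Qed.

Lemma grid3_apart x y u : y.2 + 2 < x.2 -> grid3 u x -> ~~ grid3 u y.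
Proof.
move=> far /grid3_near[ux1 ux2]; apply/negP => /grid3_near[uy1 uy2].
by move: far ux1 ux2 uy1 uy2; clear; lia.
Qed.

Lemma bit_colcode j (r : 'I_3) : bit (colcode A j) r = ((r, j) \in A).
Proof.
rewrite /colcode !big_ord_recl big_ord0 /=.
case: r => -[|[|[|//]]] r_lt;
  [have -> : Ordinal r_lt = ord0 | have -> : Ordinal r_lt = lift ord0 ord0
  | have -> : Ordinal r_lt = lift ord0 (lift ord0 ord0)]; try exact: val_inj;
  by rewrite /bit; case: (_ \in A); case: (_ \in A); case: (_ \in A).
Qed.

Lemma colcode_lt j : colcode A j < absent.
Proof.
rewrite /colcode !big_ord_recl big_ord0 /=.
by case: (_ \in A); case: (_ \in A); case: (_ \in A).
Qed.

Lemma weight_colcode j : weight (colcode A j) = \sum_(r < 3) ((r, j) \in A).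
Proof.
rewrite /weight !big_ord_recl big_ord0 addn0 addnA -(bit_colcode j ord0).
by rewrite -(bit_colcode j (lift ord0 ord0)) -(bit_colcode j (lift ord0 (lift ord0 ord0))).
Qed.

Lemma card_columns : #|A| = \sum_(j < n) weight (colcode A j).
Proof.
under eq_bigr do rewrite weight_colcode.
rewrite exchange_big pair_bigA -sum1_card big_mkcond /=.
by apply: eq_bigr => -[r j] _; case: (_ \in A).
Qed.

Lemma code_col (j : 'I_n) : code A (j + 4) = colcode A j.
Proof. by rewrite /code addnK valK leq_addl. Qed.

Lemma code_out g : ~~ (4 <= g < n + 4) -> code A g = absent.
Proof.
rewrite /code; case: insubP => [j _ j_val|//]; case: ifP => // le4g.
by move=> /negP[]; rewrite /= -(subnK le4g) ltn_add2r -j_val ltn_ord.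
Qed.

Lemma code_in g : 4 <= g < n + 4 -> code A g < absent.
Proof.
move=> /andP[le4g lt_g]; have lt_j : g - 4 < n by lia.
by rewrite -(subnK le4g) (code_col (Ordinal lt_j)) colcode_lt.
Qed.

Lemma code_present g : (code A g != absent) = (4 <= g < n + 4).
Proof.
apply/idP/idP => [|/code_in]; last by rewrite neq_ltn => ->.
by apply: contraR => /code_out ->.
Qed.

Lemma code_mem g : code A g \in codes.
Proof.
rewrite mem_iota; have [/code_in|/code_out ->] := boolP (4 <= g < n + 4) => //.
by move/ltnW.
Qed.

Lemma present_window o c :
  c < 5 -> present (window (code A) o) c = (4 <= o + c < n + 4).
Proof. by move=> lt_c5; rewrite /present nth_window // code_present. Qed.

Lemma occupied_window o v z : z.1 < 5 -> pos v = local o z ->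
  occupied (window (code A) o) z = (v \in A).
Proof.
case: v => r j lt_z5 [col row]; rewrite /occupied nth_window // -col -row code_col.
exact: bit_colcode.
Qed.

Lemma window_vertex o z : z.1 < 5 -> z.2 < 3 -> present (window (code A) o) z.1 ->
  exists v, pos v = local o z.
Proof.
case: z => c r /= lt_c5 lt_r3; rewrite present_window // => /andP[le4 lt_n].
have lt_j : o + c - 4 < n by lia.
by exists (Ordinal lt_r3, Ordinal lt_j); rewrite /pos /local /= subnK.
Qed.

Lemma local_pos o v : o <= v.2 + 4 < o + 5 -> exists2 z, z.1 < 5 & pos v = local o z.
Proof.
move=> /andP[le_o lt_o]; exists (v.2 + 4 - o, val v.1); first by rewrite /=; lia.
by rewrite /pos /local /= subnKC.
Qed.

End GridEncoding.

Section LocalChecks.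
Variables (n : nat) (A : {set vertex n}).
Implicit Types (u v x y : vertex n) (z : nat * nat).

Lemma members_window o z : z \in members (window (code A) o) ->
  exists2 u, u \in A & pos u = local o z.
Proof.
rewrite mem_members => /and3P[lt_z5 lt_z3 occ].
have [|u uz] := window_vertex (A := A) (o := o) lt_z5 lt_z3.
  by apply: contraLR occ; rewrite /present negbK /occupied => /eqP ->; rewrite bit_absent.
by exists u; rewrite // -(occupied_window _ lt_z5 uz).
Qed.

Lemma window_members o u z : u \in A -> z.1 < 5 -> pos u = local o z ->
  z \in members (window (code A) o).
Proof.
move=> uA lt_z5 uz; rewrite mem_members lt_z5 (occupied_window _ lt_z5 uz) uA andbT.
by rewrite -[z.2]/((local o z).2) -uz /= ltn_ord.
Qed.

Lemma vacant_window o cs z : z \in vacant (window (code A) o) cs -> z.1 < 5 ->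
  exists2 v, v \notin A & pos v = local o z.
Proof.
rewrite mem_vacant => /and4P[_ lt_z3 pres occ] lt_z5.
have [v vz] := window_vertex lt_z5 lt_z3 pres.
by exists v; rewrite // -(occupied_window _ lt_z5 vz).
Qed.

Lemma window_ok_of_locating_dominating o :
  locating_dominating (@grid3 n) A -> window_ok false (window (code A) o).
Proof.
case=> dom sep; set w := window (code A) o.
have member u v zv : u \in A -> grid3 u v -> pos v = local o zv -> 1 <= zv.1 <= 3 ->
    exists2 zu, zu \in members w & pos u = local o zu.
  move=> uA /grid3_near near [vcol _] /andP[le1 le3].
  have [|zu lt_zu5 uz] := local_pos (o := o) (v := u); first by lia.
  by exists zu; first exact: window_members uz.
apply/allP => -[xc xr] x_vac; have := x_vac; rewrite mem_vacant inE => /andP[/eqP x3 _].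
have [vx vxA vxz] : exists2 vx, vx \notin A & pos vx = local o (xc, xr).
  by apply: vacant_window x_vac _; rewrite x3.
have x_col : 0 < xc <= 3 by move: x3 => /= ->.
apply/andP; split.
  have /exists_inP[u uA uvx] := dom vx vxA.
  have [zu zu_mem uz] := member u vx _ uA uvx vxz x_col.
  by apply/orP; left; apply/hasP; exists zu; rewrite // -(grid3_local uz vxz).
apply/allP => -[yc yr] y_vac.
have := y_vac; rewrite mem_vacant mem_iota => /andP[/= y_col _].
have [vy vyA vyz] : exists2 vy, vy \notin A & pos vy = local o (yc, yr).
  by apply: vacant_window y_vac _; rewrite /=; lia.
have [// | yx] := eqVneq (yc, yr) (xc, xr).
have vxy : vx != vy.
  by apply: contraNneq yx => vxy; move: vyz; rewrite -vxy vxz => -[/addnI -> ->].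
have /exists_inP[u uA uxy] := sep vx vy vxA vyA vxy.
have [zu zu_mem uz] : exists2 zu, zu \in members w & pos u = local o zu.
  have [uvx | /negbTE uvx] := boolP (grid3 u vx); first exact: member uA uvx vxz x_col.
  by apply: member uA _ vyz _; [rewrite uvx in uxy; case: grid3 uxy | rewrite /=; lia].
apply/orP; right; apply/hasP; exists zu => //.
by rewrite -(grid3_local uz vxz) -(grid3_local uz vyz).
Qed.

Lemma window_ok_sound x : x \notin A -> window_ok true (window (code A) x.2.+1) ->
  (dominated (@grid3 n) A x \/ val x.1 = 1 /\ x.2.+1 = n) /\
  (forall y, y \notin A -> y != x -> y.2 <= x.2 <= y.2 + 2 -> separated (@grid3 n) A x y).
Proof.
move=> xA; set o := x.2.+1; set w := window (code A) o.
have xz : pos x = local o (3, val x.1) by rewrite /pos /local /o addSnnS.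
have x_vac : (3, val x.1) \in vacant w [:: 3].
  rewrite mem_vacant inE eqxx ltn_ord /w (occupied_window _ _ xz) // xA andbT.
  by rewrite present_window //=; have := ltn_ord x.2; rewrite /o; lia.
move=> /allP/(_ _ x_vac)/andP[domx sepx]; split.
  case/orP: domx => [/hasP[z /members_window[u uA uz] zx] | /and3P[_ /eqP[x1] last]].
    by left; apply/exists_inP; exists u; rewrite // (grid3_local uz xz).
  right; split=> //; move: last; rewrite present_window //= negb_and -leqNgt.
  by case/orP=> //; have := ltn_ord x.2; lia.
move=> y yA yx /andP[le_yx le_xy].
have [|[c r] /= lt_c5 yz] := local_pos (o := o) (v := y); first by rewrite /o; lia.
have y_vac : (c, r) \in vacant w (iota 1 3).
  rewrite mem_vacant mem_iota (occupied_window (z := (c, r)) _ lt_c5 yz) yA andbT.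
  rewrite present_window //=; move: yz => [col <-]; rewrite ltn_ord -col.
  by have := ltn_ord y.2; rewrite /o in col *; lia.
move/allP/(_ _ y_vac): sepx; have [zyx | _] := eqVneq (c, r) (3, val x.1).
  by move: yz; rewrite zyx -xz => /pos_inj yx'; rewrite yx' eqxx in yx.
move=> /hasP[z /members_window[u uA uz] h].
by apply/exists_inP; exists u; rewrite // (grid3_local uz xz) (grid3_local uz yz).
Qed.

Lemma resolving_of_window_ok :
  (forall j, j < n -> window_ok true (window (code A) j.+1)) -> adj_resolving (@grid3 n) A.
Proof.
move=> ok; apply/adj_resolvingP => x y.
wlog le_yx : x y / y.2 <= x.2 => [sym xA yA xy | xA yA xy].
  have [le | /ltnW le] := leqP y.2 x.2; first exact: sym.
  by rewrite separatedC; apply: sym; rewrite // eq_sym.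
have [domx sepx] := window_ok_sound xA (ok _ (ltn_ord x.2)).
have [near | far] := leqP x.2 (y.2 + 2).
  by apply: sepx; rewrite // 1?eq_sym // le_yx.
case: domx => [/exists_inP[z zA zx] | [_ lastx]].
  exact: separated_by_dominator zA zx (grid3_apart far zx).
have [[/exists_inP[z zA zy] | [_ lasty]] _] := window_ok_sound yA (ok _ (ltn_ord y.2)).
  have zx : ~~ grid3 z x by apply/negP => /(grid3_apart far); rewrite zy.
  by rewrite separatedC; apply: separated_by_dominator zA zy zx.
have /succn_inj xy2 : x.2.+1 = y.2.+1 by rewrite lastx lasty.
by rewrite xy2 ltnNge leq_addr in far.
Qed.

Definition prefix_card k := \sum_(j < k) weight (code A (j + 4)).

Lemma card_prefix_card : #|A| = prefix_card n.
Proof. by rewrite card_columns; apply: eq_bigr => j _; rewrite code_col. Qed.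

Lemma potential_bound k : locating_dominating (@grid3 n) A -> k <= n ->
  exists2 v, lookup potential (code A k) (code A k.+1) (code A k.+2) (code A k.+3) = Some v
           & v + k <= prefix_card k + 2.
Proof.
move=> ldA; elim: k => [_ | k IH lt_kn].
  by exists 2; [rewrite !code_out // potential_start | rewrite /prefix_card big_ord0].
have [v hv le_v] := IH (ltnW lt_kn).
have lt_x : code A k.+4 < absent by apply: code_in; lia.
have [||v' hv' lt_v'] := potential_step _ lt_x hv; first by split; apply: code_mem.
  exact: window_ok_of_locating_dominating.
by exists v' => //; rewrite /prefix_card big_ord_recr -/(prefix_card k) /= addn4; lia.
Qed.

Lemma locating_dominating_card : 0 < n -> locating_dominating (@grid3 n) A -> n < #|A|.
Proof.
move=> n_gt0 ldA; have [v hv le_v] := potential_bound ldA (leqnn n).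
have : 2 < v.
  apply: potential_final hv _; first by split; apply: code_mem.
    by rewrite code_present; lia.
  by rewrite -[absent](@code_out _ A n.+4) ?window_ok_of_locating_dominating //; lia.
by rewrite card_prefix_card; lia.
Qed.

End LocalChecks.

Lemma adim_grid3_ge n : 0 < n -> n <= adim (@grid3 n).
Proof.
move=> n_gt0; apply: adim_geq => A /locating_dominating_of_resolving[B ldB le_B].
by rewrite -ltnS (leq_trans _ le_B) // locating_dominating_card.
Qed.

(** * The upper bound *)

(* Columns cycle through the row sets {0,2}, {}, {1}; when 3 divides n the
   cycle starts at {1}, so that the last column is empty. *)
Definition stripe_shift n : nat := if n %% 3 == 0 then 2 else 0.
Definition stripe n j : nat := nth 0 [:: 5; 0; 2] ((j + stripe_shift n) %% 3).
Definition stripe_set n : {set vertex n} := [set v : vertex n | bit (stripe n v.2) v.1].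
Definition stripe_code n g : nat := if 4 <= g < n + 4 then stripe n (g - 4) else absent.

Lemma stripe_mem n j : stripe n j \in [:: 5; 0; 2].
Proof.
by rewrite /stripe; case: (_ %% 3) (ltn_pmod (j + stripe_shift n) (isT : 0 < 3)) => [|[|[|]]].
Qed.

Lemma colcode_stripe n (j : 'I_n) : colcode (stripe_set n) j = stripe n j.
Proof.
rewrite /colcode !big_ord_recl big_ord0 !inE /=.
by have := stripe_mem n j; rewrite !inE => /or3P[] /eqP ->.
Qed.

Lemma code_stripe n g : code (stripe_set n) g = stripe_code n g.
Proof.
rewrite /stripe_code; case: ifP => [/andP[le4 lt_n] | /negbT/code_out //].
have lt_j : g - 4 < n by lia.
by rewrite -{1}(subnK le4) (code_col _ (Ordinal lt_j)) colcode_stripe.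
Qed.

Lemma stripe_shift_sub n : 3 <= n -> stripe_shift (n - 3) = stripe_shift n.
Proof. by move=> le3n; rewrite /stripe_shift -{2}(subnK le3n) modnDr. Qed.

Lemma stripe_code_shift n g :
  3 <= n -> 7 <= g -> stripe_code n g = stripe_code (n - 3) (g - 3).
Proof.
move=> le3n le7g; rewrite /stripe_code /stripe stripe_shift_sub //.
have -> : (4 <= g < n + 4) = (4 <= g - 3 < n - 3 + 4) by apply/idP/idP; lia.
case: ifP => // _; have -> : g - 4 = g - 3 - 4 + 3 by lia.
by rewrite -addnA (addnC 3) addnA modnDr.
Qed.

Lemma stripe_code_prefix n g :
  3 <= n -> g <= n -> stripe_code n g = stripe_code (n - 3) g.
Proof.
move=> le3n le_gn; rewrite /stripe_code /stripe stripe_shift_sub //.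
by have -> : (g < n + 4) = (g < n - 3 + 4) by lia.
Qed.

Lemma stripe_windows_small :
  all (fun n => all (fun j => window_ok true (window (stripe_code n) j.+1)) (iota 0 n))
      (iota 0 10).
Proof. by vm_compute. Qed.

Lemma stripe_window_ok n j : j < n -> window_ok true (window (stripe_code n) j.+1).
Proof.
elim/ltn_ind: n j => n IH j lt_jn; have [small | large] := ltnP n 10.
  move/allP/(_ n): stripe_windows_small; rewrite mem_iota small => /(_ isT)/allP/(_ j).
  by rewrite mem_iota lt_jn; apply.
have [le6j | lt_j6] := leqP 6 j.
  have -> : window (stripe_code n) j.+1 = window (stripe_code (n - 3)) (j - 3).+1.
    rewrite /window; congr [:: _; _; _; _; _];
      by rewrite stripe_code_shift; try lia; congr stripe_code; lia.
  by apply: IH; lia.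
have -> : window (stripe_code n) j.+1 = window (stripe_code (n - 3)) j.+1.
  by rewrite /window; congr [:: _; _; _; _; _]; rewrite stripe_code_prefix //; lia.
by apply: IH; lia.
Qed.

Lemma stripe_resolving n : adj_resolving (@grid3 n) (stripe_set n).
Proof.
apply: resolving_of_window_ok => j lt_jn.
by rewrite /window !code_stripe; apply: stripe_window_ok.
Qed.

Lemma weight_stripe3 n k :
  weight (stripe n k) + weight (stripe n k.+1) + weight (stripe n k.+2) = 3.
Proof.
rewrite /stripe !addSn -(addn2 (k + _)) -(addn1 (k + _)).
rewrite -(modnDml (k + _) 1) -(modnDml (k + _) 2).
by case: (_ %% 3) (ltn_pmod (k + stripe_shift n) (isT : 0 < 3)) => [|[|[|]]].
Qed.

Lemma sum_stripe_period n m :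
  \sum_(j < m + 3) weight (stripe n j) = \sum_(j < m) weight (stripe n j) + 3.
Proof.
by rewrite addn3 !big_ord_recr -(weight_stripe3 n m) /= !addnA.
Qed.

Lemma card_stripe_set n : #|stripe_set n| = if n %% 3 == 1 then n.+1 else n.
Proof.
have sum_q m q r : m = q * 3 + r ->
    \sum_(j < m) weight (stripe n j) = q * 3 + \sum_(j < r) weight (stripe n j).
  move=> ->; elim: q => [|q IHq]; first by rewrite mul0n.
  by rewrite mulSn -addnA addnC sum_stripe_period IHq; lia.
rewrite card_columns; under eq_bigr do rewrite colcode_stripe.
rewrite (sum_q n _ _ (divn_eq n 3)) /stripe /stripe_shift.
move: (divn_eq n 3) (ltn_pmod n (isT : 0 < 3)).
case: (n %% 3) => [|[|[|//]]] /= n_eq _; rewrite ?big_ord_recr ?big_ord0 /=.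
all: by rewrite -?[weight 5]/2 -?[weight 0]/0; lia.
Qed.

Theorem theorem1p12 (n : nat) : 0 < n ->
  if n %% 3 == 1 then n <= adim (@grid3 n) <= n.+1
  else n.-1 <= adim (@grid3 n) <= n.
Proof.
move=> n_gt0; have lo := adim_grid3_ge n_gt0.
have := adim_leq_card (stripe_resolving n); rewrite card_stripe_set.
by case: ifP => _ up; rewrite up andbT // (leq_trans (leq_pred n)).
Qed.
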